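(* In the supercuspidal setting below, let $p$ be odd, $L/\mathbb Q_p$ unramified, $k=c_0\ge2$, assume $k\ge10$ or $p\ge10$, and let $\psi$ be a nontrivial Dirichlet character modulo $p^k$. Suppose that for some $i\in\{1,2,3\}$ and some $1\le j\le k$ we have $v_p(a_i)=j$. Then $\widehat H(\psi,a_1,a_2,a_3)=0$ unless $\psi$ has conductor $p^{k-j}$ and $v_p(a_1)=v_p(a_2)=v_p(a_3)=j$.
   Context: Supercuspidal setting: $p$ is a prime, $L/\mathbb Q_p$ a quadratic extension with ring of integers $\mathcal O_L$, ramification index $e\in\{1,2\}$, $d=v_p(\mathrm{disc}(L/\mathbb Q_p))$; $\eta_L$ is the nontrivial quadratic character of $\mathbb Q_p^\times$ trivial on $\mathrm{Nm}(L^\times)$. $\xi$ is a character of $L^\times$ with $\xi\neq\xi\circ(\text{Galois conjugation})$ and $\xi|_{\mathbb Q_p^\times}=\eta_L$, with $(L/\mathbb Q_p,\xi)$ an admissible pair (corresponding to a trivial central character dihedral supercuspidal representation of $\mathrm{PGL}_2(\mathbb Q_p)$). $c(\xi)$ is its conductor exponent and $c_0=c(\xi)/e$. Set $\kappa=c_0$ if $L$ unramified, $\kappa=c_0+1$ if $L$ ramified. Let $\gamma$ be a fixed complex number of modulus $1$ depending only on $L$. For integers $m,n$ and $k\ge1$, $$H(m,n;p^k)=\overline\gamma\,p^{-d/2}\sum_{\substack{t\in(\mathcal O_L/p^k\mathcal O_L)^\times\\ \mathrm{Nm}(t)\equiv mn\ (p^k)}}\xi(t)\,e_{p^k}(-\mathrm{Tr}(t))$$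 if $k\ge\kappa$ and $p\nmid mn$, and $H(m,n;p^k)=0$ otherwise. For a Dirichlet character $\psi$ mod $p^k$ and integers $a_1,a_2,a_3$, $$\widehat H(\psi,a_1,a_2,a_3)=p^{-2k}\sum_{u,x_1,x_2,x_3\bmod p^k}\overline\psi(u)H(\overline u x_1x_2x_3,1;p^k)\,e_{p^k}(a_1x_1+a_2x_2+a_3x_3-ua_1a_2a_3).$$ Here $e_q(x)=\exp(2\pi i x/q)$, $\overline u$ is the inverse mod $p^k$, and Dirichlet characters vanish on non-units. *)

From HB Require Import structures.
From mathcomp Require Import all_boot all_order all_algebra algC.
Set Implicit Arguments. Unset Strict Implicit. Unset Printing Implicit Defensive.
Import Order.TTheory GRing.Theory Num.Theory.
Local Open Scope ring_scope.

(* O_L / p^k O_L for L = Q_p(sqrt eps) unramified (eps a non-residue mod p, p odd):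
   pairs (a, b) standing for a + b sqrt(eps). *)
Definition ZL (p k : nat) := ('Z_(p ^ k) * 'Z_(p ^ k))%type.

Definition epsZ (p k : nat) (eps : int) : 'Z_(p ^ k) := eps%:~R.

Definition mulL (p k : nat) (eps : int) (s t : ZL p k) : ZL p k :=
  (s.1 * t.1 + epsZ p k eps * (s.2 * t.2), s.1 * t.2 + s.2 * t.1).

Definition oneL (p k : nat) : ZL p k := (1, 0).

Definition unitL (p k : nat) (eps : int) (t : ZL p k) : bool :=
  [exists s : ZL p k, mulL eps t s == oneL p k].

Definition normL (p k : nat) (eps : int) (t : ZL p k) : 'Z_(p ^ k) :=
  t.1 ^+ 2 - epsZ p k eps * t.2 ^+ 2.

Definition trL (p k : nat) (t : ZL p k) : 'Z_(p ^ k) := t.1 + t.1.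

Definition conjL (p k : nat) (t : ZL p k) : ZL p k := (t.1, - t.2).

Definition one_modL (p k : nat) (n : nat) (t : ZL p k) : bool :=
  (val t.1 == 1 %[mod p ^ n])%N && (val t.2 == 0 %[mod p ^ n])%N.

(* e_{p^k}(x) = exp(2 pi i x / p^k); (q.-root (-1)) = exp(i pi / q) in algC *)
Definition eC (p k : nat) (x : 'Z_(p ^ k)) : algC :=
  ((p ^ k)%N.-root (-1)) ^+ (2 * val x).

(* xi : a character of L^x, seen through (O_L/p^k O_L)^x (its conductor is
   c(xi) = k), with xi|_{Q_p^x} = eta_L (trivial on Z_p^x as L is unramified),
   xi <> xi o conj, and c(xi) = k exactly. *)
Definition xi_hyp (p k : nat) (eps : int) (xi : ZL p k -> algC) : Prop :=
  [/\ xi (oneL p k) = 1,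
      (forall s t, unitL eps s -> unitL eps t -> xi (mulL eps s t) = xi s * xi t),
      (forall a : 'Z_(p ^ k), a \is a GRing.unit -> xi (a, 0) = 1),
      (exists2 t, unitL eps t & xi (conjL t) != xi t) &
      (exists2 t, unitL eps t && one_modL (k.-1) t & xi t != 1)].

(* H(m, n; p^k) in the unramified case (d = 0, kappa = c0 = k, so k >= kappa) *)
Definition Hfun (p k : nat) (eps : int) (gamma : algC) (xi : ZL p k -> algC)
  (m n : 'Z_(p ^ k)) : algC :=
  if (k <= k)%N && ((m * n) \is a GRing.unit) then
    gamma^* * \sum_(t : ZL p k | unitL eps t && (normL eps t == m * n))
                 xi t * eC (- trL t)
  else 0.

Definition dirichlet_char (p k : nat) (psi : 'Z_(p ^ k) -> algC) : Prop :=
  [/\ psi 1 = 1,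
      (forall u v, psi (u * v) = psi u * psi v) &
      (forall u, u \isn't a GRing.unit -> psi u = 0)].

Definition triv_mod (p k : nat) (psi : 'Z_(p ^ k) -> algC) (f : nat) : Prop :=
  forall u : 'Z_(p ^ k), u \is a GRing.unit -> (val u == 1 %[mod p ^ f])%N ->
    psi u = 1.

Definition conductor_exp (p k : nat) (psi : 'Z_(p ^ k) -> algC) (f : nat) : Prop :=
  triv_mod psi f /\ (forall g, (g < f)%N -> ~ triv_mod psi g).

Definition Hhat (p k : nat) (eps : int) (gamma : algC) (xi : ZL p k -> algC)
  (psi : 'Z_(p ^ k) -> algC) (a1 a2 a3 : int) : algC :=
  ((p%:R : algC) ^+ (2 * k))^-1 *
  \sum_(u : 'Z_(p ^ k)) \sum_(x1 : 'Z_(p ^ k)) \sum_(x2 : 'Z_(p ^ k))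
    \sum_(x3 : 'Z_(p ^ k))
      (psi u)^* * Hfun eps gamma xi (u^-1 * x1 * x2 * x3) 1 *
      eC (a1%:~R * x1 + a2%:~R * x2 + a3%:~R * x3 - u * a1%:~R * a2%:~R * a3%:~R).

Definition vp_eq (p : nat) (a : int) (j : nat) : bool :=
  (a != 0) && (logn p `|a|%N == j).

From HB Require Import structures.
From mathcomp Require Import all_boot all_order all_algebra algC cyclotomic.
From mathcomp Require Import ring zify.
Set Implicit Arguments. Unset Strict Implicit. Unset Printing Implicit Defensive.
Import Order.TTheory GRing.Theory Num.Theory.
Local Open Scope ring_scope.

(* Write S(A1, A2, A3) for the four-fold sum defining Hhat without its factor
   p^(-2k). Only two features of H enter: H(m, 1) vanishes unless m is a unit,
   and it sees (u, x1, x2, x3) only through u^-1 x1 x2 x3. The substitution (u, x1) -> (w u, w x1), w a unit,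
   multiplies S by conj(psi w) and twists the phase by e(A1 (w - 1) (x1 - u A2 A3)).
   With A1 (w - 1) = 0 this shows that psi is trivial on the units congruent to
   1 mod p^(k - v1), where v1 = v_p(a1) < k. If moreover p | a2 a3 and psi is
   trivial mod p^(k - v1 - 1), averaging over w = 1 + p^(k - v1 - 1) z, z < p,
   gives S = 0, the twist being a nontrivial p-th root of unity for unit x1.
   Applied to each a_i, this pins the conductor exponent to k - v_i as soon as
   another valuation is positive, and v_i = j >= 1 makes all of them so. *)

Lemma sum_expr_eq0 (F : idomainType) (w : F) (m : nat) :
  w ^+ m = 1 -> w != 1 -> \sum_(i < m) w ^+ i = 0.
Proof.
move=> wm1 w_neq1; have /eqP := subrX1 w m.
by rewrite wm1 subrr eq_sym mulf_eq0 subr_eq0 (negbTE w_neq1) => /eqP.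
Qed.

Lemma normC_expr_eq1 (x : algC) (g : nat) : (0 < g)%N -> `|x ^+ g| = 1 -> `|x| = 1.
Proof.
by move=> g_gt0 h; apply/eqP; rewrite -(pexpr_eq1 g_gt0) ?normr_ge0 // -normrX h.
Qed.

Lemma normC_subr1_sqr (x : algC) : `|x| = 1 -> `|x - 1| ^+ 2 = 2 - 2 * 'Re x.
Proof.
move=> x1; have := normC2_Re_Im x; rewrite x1 expr1n => Rx.
rewrite normC2_Re_Im !raddfB /= (Creal_ReP 1 _) ?rpred1 // (Creal_ImP 1 _) ?rpred1 //.
transitivity ('Re x ^+ 2 + 'Im x ^+ 2 + 1 - 2 * 'Re x); first by ring.
by rewrite -Rx; ring.
Qed.

(* For the g-th roots v_i of z, the geometric sums S_i = (z - 1) / (v_i - 1)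
   add up to g. If no Re v_i exceeded Re z, then |v_i - 1| >= |z - 1| and
   |S_i| <= 1, forcing every S_i = 1 and hence every v_i = z. *)
Lemma exists_root_Re_gt (g : nat) (z : algC) : (1 < g)%N -> `|z| = 1 -> z != 1 ->
  exists2 v, v ^+ g = z & 'Re z < 'Re v.
Proof.
move=> g_gt1 z1 z_neq1; have g_gt0 := ltnW g_gt1.
have [w w_prim] := C_prim_root_exists g_gt0.
pose v (i : 'I_g) := g.-root z * w ^+ i.
have vg i : v i ^+ g = z.
  by rewrite exprMn rootCK // exprAC (prim_expr_order w_prim) expr1n mulr1.
have [/existsP [i Hi] | /existsPn Hle] := boolP [exists i, 'Re z < 'Re (v i)].
  by exists (v i).
pose S i := \sum_(a < g) v i ^+ a.
have vS i : (v i - 1) * S i = z - 1 by rewrite -subrX1 vg.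
have sumS : \sum_i S i = \sum_(i < g) 1.
  rewrite exchange_big (bigD1 (Ordinal g_gt0)) //= [X in _ + X]big1 => [|a a_neq0].
    by rewrite addr0; apply: eq_bigr => i _; rewrite expr0.
  rewrite (eq_bigr (fun i : 'I_g => g.-root z ^+ a * (w ^+ a) ^+ i)); last first.
    by move=> i _; rewrite exprMn -!exprM mulnC.
  rewrite -mulr_sumr sum_expr_eq0 ?mulr0 //.
    by rewrite exprAC (prim_expr_order w_prim) expr1n.
  rewrite -(prim_order_dvd w_prim); apply/negP => /dvdn_leq.
  by have := ltn_ord a; move: a_neq0; rewrite -val_eqE /=; lia.
have S1 i : S i = 1.
  apply: (normC_sum_upper _ sumS) => // {}i _.
  have vi1 : `|v i| = 1 by apply: (normC_expr_eq1 g_gt0); rewrite vg.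
  have z1_gt0 : 0 < `|z - 1| by rewrite normr_gt0 subr_eq0.
  have le_z_vi : `|z - 1| <= `|v i - 1|.
    rewrite -(ler_pXn2r (isT : (0 < 2)%N)) ?nnegrE ?normr_ge0 //.
    rewrite !normC_subr1_sqr // lerD2l lerN2 ler_pM2l ?ltr0n //.
    by rewrite real_leNgt ?Creal_Re ?Hle.
  have vi1_gt0 := lt_le_trans z1_gt0 le_z_vi.
  by rewrite -(ler_pM2l vi1_gt0) mulr1 -normrM vS.
have veq i : v i = z by have := vS i; rewrite S1 mulr1 => /subIr.
have : v (Ordinal g_gt0) = v (Ordinal g_gt1) by rewrite !veq.
rewrite /v expr0 expr1 => /mulfI; rewrite rootC_eq0 // -normr_eq0 z1 oner_eq0.
move=> /(_ isT) w1; have := prim_order_dvd w_prim 1.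
by rewrite expr1 -w1 eqxx dvdn1 => /eqP g1; rewrite g1 in g_gt1.
Qed.

(* [n.-root (-1)] is the n-th root of -1 of largest real part in the closed
   upper half-plane. If its (2d)-th power were 1 it would be a d-th root of -1,
   and a g-th root of it with larger real part would contradict maximality. *)
Lemma rootCN1_expr_neq1 (g d : nat) : (1 < g)%N -> (0 < d)%N ->
  ((g * d)%N.-root (-1 : algC)) ^+ (2 * d) != 1.
Proof.
move=> g_gt1 d_gt0; set n := (g * d)%N; set ze := n.-root (-1 : algC).
have n_gt0 : (0 < n)%N by rewrite muln_gt0 d_gt0 ltnW.
have ze_n : ze ^+ n = -1 by rewrite rootCK.
have N1_neq1 : (-1 : algC) != 1 by rewrite eq_sym -addr_eq0 -(natrD _ 1 1) pnatr_eq0.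
apply/negP => /eqP ze2d.
have ze_d : ze ^+ d = -1.
  have /eqP := ze2d; rewrite mulnC exprM sqrf_eq1 => /orP [/eqP ze_d1|/eqP //].
  by move: ze_n; rewrite /n mulnC exprM ze_d1 expr1n => /esym/eqP; rewrite (negbTE N1_neq1).
have ze1 : `|ze| = 1 by apply: (normC_expr_eq1 n_gt0); rewrite ze_n normrN1.
have ze_neq1 : ze != 1.
  by apply: contraNneq N1_neq1 => ze_1; rewrite -ze_d ze_1 expr1n.
have [v v_g ze_lt_v] := exists_root_Re_gt g_gt1 ze1 ze_neq1.
have v_n : v ^+ n = -1 by rewrite /n exprM v_g.
have Re_le (y : algC) : y ^+ n = -1 -> 0 <= 'Im y -> 'Re y <= 'Re ze.
  exact: rootC_Re_max.
have [Im_ge0|Im_lt0] := real_ge0P (Creal_Im v).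
  by have := lt_le_trans ze_lt_v (Re_le v v_n Im_ge0); rewrite ltxx.
have vc_n : v^* ^+ n = -1 by rewrite -rmorphXn v_n rmorphN1.
have Im_vc : 0 <= 'Im v^* by rewrite Im_conj oppr_ge0 ltW.
have := Re_le _ vc_n Im_vc; rewrite Re_conj => v_le_ze.
by have := lt_le_trans ze_lt_v v_le_ze; rewrite ltxx.
Qed.

Section HatSum.

Variables (p k : nat).
Hypotheses (p_gt1 : (1 < p)%N) (k_gt0 : (0 < k)%N).
Local Notation R := 'Z_(p ^ k).

Fact pk_gt1 : (1 < p ^ k)%N.
Proof. by rewrite -(expn0 p) ltn_exp2l. Qed.

Lemma natr_Zp_eq0 (m : nat) : ((m%:R : R) == 0) = (p ^ k %| m)%N.
Proof. by rewrite -val_eqE /= val_Zp_nat ?pk_gt1. Qed.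

Lemma val_natr_Zp (m : nat) : val (m%:R : R) = (m %% p ^ k)%N.
Proof. exact: val_Zp_nat pk_gt1 m. Qed.

Lemma natr_Zp_pk : (p ^ k)%:R = 0 :> R.
Proof. by apply/eqP; rewrite natr_Zp_eq0. Qed.

Lemma unit_addr_pM (x r : R) : x \is a GRing.unit -> x + p%:R * r \is a GRing.unit.
Proof.
rewrite -[x]natr_Zp -[r]natr_Zp -natrM -natrD !unitZpE ?pk_gt1 //.
rewrite !coprime_pexpl // => x_coprime.
by rewrite -coprime_modr addnC mulnC modnMDl coprime_modr.
Qed.

Lemma subr1_Zp_dvd (u : R) (f : nat) :
  (val u == 1 %[mod p ^ f])%N -> exists y, u - 1 = (p ^ f)%:R * y.
Proof.
move=> /eqP hu; exists ((val u %/ p ^ f)%:R - (1 %/ p ^ f)%:R).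
have -> : u - 1 = (val u)%:R - (1%N)%:R by rewrite natr_Zp.
rewrite {1}(divn_eq (val u) (p ^ f)) {1}(divn_eq 1 (p ^ f)) hu !natrD !natrM.
ring.
Qed.

Local Notation ze := ((p ^ k)%N.-root (-1 : algC)).

Lemma eC_natr (m : nat) : eC (m%:R : R) = ze ^+ (2 * m).
Proof.
have ze2 : ze ^+ (2 * p ^ k) = 1.
  by rewrite mulnC exprM rootCK ?expn_gt0 ?(ltnW p_gt1) // sqrrN expr1n.
rewrite /eC val_natr_Zp {2}(divn_eq m (p ^ k)) mulnDr exprD.
have -> : (2 * (m %/ p ^ k * p ^ k) = 2 * p ^ k * (m %/ p ^ k))%N by ring.
by rewrite [in RHS]exprM ze2 expr1n mul1r.
Qed.

Lemma eCD (x y : R) : eC (x + y) = eC x * eC y.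
Proof. by rewrite -(natr_Zp x) -(natr_Zp y) -natrD !eC_natr mulnDr exprD. Qed.

Lemma eC0 : eC (0 : R) = 1.
Proof. by rewrite -(mulr0n 1) eC_natr expr0. Qed.

Lemma eCMn (x : R) (m : nat) : eC (x *+ m) = eC x ^+ m.
Proof. by elim: m => [|m IHm]; rewrite ?eC0 // mulrS eCD IHm exprS. Qed.

Lemma eC_pk1_neq1 (c : R) : c \is a GRing.unit -> eC ((p ^ k.-1)%:R * c) != 1.
Proof.
move=> c_unit; apply: contra_neq (_ : eC ((p ^ k.-1)%:R : R) != 1) => [h|].
  by rewrite -[_%:R](mulrK c_unit) -(natr_Zp c^-1) mulr_natr eCMn h expr1n.
rewrite eC_natr -[in X in X.-root _](prednK k_gt0) expnS.
by apply: rootCN1_expr_neq1; rewrite // expn_gt0 ltnW.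
Qed.

Lemma eC_pk1_expr (y : R) : eC ((p ^ k.-1)%:R * y) ^+ p = 1.
Proof.
by rewrite -eCMn -mulrnAl -mulr_natr -natrM -expnSr prednK // natr_Zp_pk mul0r eC0.
Qed.

Lemma val_natr_mod (m f : nat) : (f <= k)%N -> (val (m%:R : R) == m %[mod p ^ f])%N.
Proof. by move=> fk; rewrite val_natr_Zp modn_dvdm ?dvdn_exp2l. Qed.

Variables (psi : R -> algC) (h : R -> algC).
Hypotheses (psi_char : dirichlet_char psi)
  (h_unit : forall m, h m != 0 -> m \is a GRing.unit).

(* [hatsum] is p^(2k) Hhat, with [h m] in place of H(m, 1). *)
Definition hatterm (A1 A2 A3 u x1 x2 x3 : R) : algC :=
  (psi u)^* * h (u^-1 * x1 * x2 * x3) *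
  eC (A1 * x1 + A2 * x2 + A3 * x3 - u * A1 * A2 * A3).

Definition hatfiber (A1 A2 A3 u x1 : R) : algC :=
  \sum_(x2 : R) \sum_(x3 : R) hatterm A1 A2 A3 u x1 x2 x3.

Definition hatsum (A1 A2 A3 : R) : algC :=
  \sum_(u : R) \sum_(x1 : R) hatfiber A1 A2 A3 u x1.

Lemma hatsum_swap12 (A1 A2 A3 : R) : hatsum A1 A2 A3 = hatsum A2 A1 A3.
Proof.
apply: eq_bigr => u _; rewrite /hatfiber exchange_big; do 3 apply: eq_bigr => ? _.
by rewrite /hatterm; congr (_ * _ * _); [congr (h _) | congr (eC _)]; ring.
Qed.

Lemma hatsum_swap23 (A1 A2 A3 : R) : hatsum A1 A2 A3 = hatsum A1 A3 A2.
Proof.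
do 2 apply: eq_bigr => ? _; rewrite /hatfiber exchange_big; do 2 apply: eq_bigr => ? _.
by rewrite /hatterm; congr (_ * _ * _); [congr (h _) | congr (eC _)]; ring.
Qed.

Lemma hatsum_swap13 (A1 A2 A3 : R) : hatsum A1 A2 A3 = hatsum A3 A2 A1.
Proof. by rewrite hatsum_swap12 hatsum_swap23 hatsum_swap12. Qed.

Lemma hatfiber_unit (A1 A2 A3 u x1 : R) :
  hatfiber A1 A2 A3 u x1 != 0 -> x1 \is a GRing.unit.
Proof.
apply: contraTT => x1_nonunit; rewrite negbK; apply/eqP.
do 2 apply: big1 => ? _.
apply/eqP; rewrite /hatterm !mulf_eq0; apply/orP; left; apply/orP; right.
by apply: contraNT x1_nonunit => /h_unit; rewrite !unitrM => /andP [/andP [/andP [_ ->]]].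
Qed.

Lemma hatfiber_dilate (w A1 A2 A3 u x1 : R) : w \is a GRing.unit ->
  hatfiber A1 A2 A3 (w * u) (w * x1) =
  (psi w)^* * eC (A1 * (w - 1) * (x1 - u * A2 * A3)) * hatfiber A1 A2 A3 u x1.
Proof.
move=> w_unit; case: psi_char => _ psiM psi0.
rewrite /hatfiber mulr_sumr; apply: eq_bigr => x2 _.
rewrite mulr_sumr; apply: eq_bigr => x3 _; rewrite /hatterm psiM rmorphM /=.
have [u_unit|u_nonunit] := boolP (u \is a GRing.unit); last first.
  by rewrite (psi0 u) // rmorph0 !(mulr0, mul0r).
have -> : (w * u)^-1 * (w * x1) = u^-1 * x1 by rewrite invrM // -mulrA mulKr.
have -> : A1 * (w * x1) + A2 * x2 + A3 * x3 - w * u * A1 * A2 * A3 =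
    A1 * x1 + A2 * x2 + A3 * x3 - u * A1 * A2 * A3 +
    A1 * (w - 1) * (x1 - u * A2 * A3) by ring.
by rewrite eCD; ring.
Qed.

Lemma hatsum_dilate (w A1 A2 A3 : R) : w \is a GRing.unit ->
  hatsum A1 A2 A3 = (psi w)^* *
  \sum_(u : R) \sum_(x1 : R)
     eC (A1 * (w - 1) * (x1 - u * A2 * A3)) * hatfiber A1 A2 A3 u x1.
Proof.
move=> w_unit; rewrite /hatsum (reindex_inj (mulrI w_unit)) mulr_sumr.
apply: eq_bigr => u _; rewrite (reindex_inj (mulrI w_unit)) mulr_sumr.
by apply: eq_bigr => x1 _; rewrite hatfiber_dilate // mulrA.
Qed.

Lemma hatsum_eq0_psi_neq1 (w A1 A2 A3 : R) : w \is a GRing.unit -> psi w != 1 ->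
  A1 * (w - 1) = 0 -> hatsum A1 A2 A3 = 0.
Proof.
move=> w_unit psi_w A1w.
have : hatsum A1 A2 A3 = (psi w)^* * hatsum A1 A2 A3.
  rewrite {1}(hatsum_dilate _ _ _ w_unit); congr (_ * _).
  by do 2 apply: eq_bigr => ? _; rewrite A1w mul0r eC0 mul1r.
move/eqP; rewrite -subr_eq0 -{1}[hatsum _ _ _]mul1r -mulrBl mulf_eq0 subr_eq0.
by rewrite -(inj_eq (can_inj conjCK)) conjCK rmorph1 eq_sym (negbTE psi_w) => /eqP.
Qed.

Lemma hatsum_eq0_triv_mod (g : nat) (c q A1 A2 A3 : R) :
  (0 < g <= k)%N -> triv_mod psi g -> c \is a GRing.unit ->
  A1 * (p ^ g)%:R = (p ^ k.-1)%:R * c -> A2 * A3 = p%:R * q ->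
  hatsum A1 A2 A3 = 0.
Proof.
move=> /andP [g_gt0 g_le_k] psi_g c_unit A1pg A23.
pose om u x1 := eC ((p ^ k.-1)%:R * (c * (x1 - u * A2 * A3))).
have dilate (z : nat) :
    hatsum A1 A2 A3 = \sum_(u : R) \sum_(x1 : R) om u x1 ^+ z * hatfiber A1 A2 A3 u x1.
  pose w : R := 1 + (p ^ g)%:R *+ z.
  have w_unit : w \is a GRing.unit.
    by rewrite /w -(prednK g_gt0) expnS natrM -mulrnAr unit_addr_pM ?unitr1.
  have psi_w : psi w = 1.
    apply: psi_g => //; rewrite /w -mulr_natr -natrM addrC natr1.
    by rewrite (eqP (val_natr_mod _ g_le_k)) mulnC -addn1 modnMDl.
  rewrite (hatsum_dilate _ _ _ w_unit) psi_w rmorph1 mul1r.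
  do 2 apply: eq_bigr => ? _; rewrite /om -eCMn /w addrAC subrr add0r.
  by rewrite mulrnAr A1pg mulrnAl -mulrA.
have : (p%:R : algC) * hatsum A1 A2 A3 = 0.
  rewrite mulr_natl -[in X in _ *+ X](card_ord p) -sumr_const.
  rewrite (eq_bigr _ (fun (z : 'I_p) _ => dilate z)) exchange_big big1 // => u _.
  rewrite exchange_big big1 // => x1 _; rewrite -mulr_suml.
  have [->|fiber_neq0] := eqVneq (hatfiber A1 A2 A3 u x1) 0; first by rewrite mulr0.
  rewrite sum_expr_eq0 ?mul0r ?eC_pk1_expr // eC_pk1_neq1 // unitrM c_unit.
  rewrite -mulrA A23 mulrCA -mulrN unit_addr_pM //.
  exact: hatfiber_unit fiber_neq0.
by move/eqP; rewrite mulf_eq0 pnatr_eq0 (gtn_eqF (ltnW p_gt1)) => /eqP.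
Qed.

Hypotheses (p_prime : prime p)
  (psi_nontriv : exists2 u : R, u \is a GRing.unit & psi u != 1).

Lemma intr_Zp_dvdn (d : nat) (b : int) : (d %| `|b|)%N -> exists y : R, b%:~R = d%:R * y.
Proof.
move=> /dvdnP [m bE]; exists ((-1) ^+ (b < 0)%R * m%:R).
by rewrite {1}[b]intEsign bE intrM rmorphXn rmorphN1 /= -pmulrn natrM; ring.
Qed.

Lemma intr_Zp_logn (b : int) : b != 0 ->
  exists2 c : R, c \is a GRing.unit & b%:~R = (p ^ logn p `|b|)%:R * c.
Proof.
rewrite -absz_gt0 => b_gt0; have [m p_coprime_m bE] := pfactor_coprime p_prime b_gt0.
exists ((-1) ^+ (b < 0)%R * m%:R).
  by rewrite unitrM unitrX ?unitrN1 // unitZpE ?pk_gt1 // coprime_pexpl.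
by rewrite {1}[b]intEsign {1}bE intrM rmorphXn rmorphN1 /= -pmulrn natrM; ring.
Qed.

Lemma not_triv_mod0 : ~ triv_mod psi 0.
Proof.
by case: psi_nontriv => u u_unit psi_u psi0; rewrite psi0 ?eqxx // expn0 !modn1 in psi_u.
Qed.

Lemma triv_mod_of_hatsum (d : nat) (A1 A2 A3 y : R) : hatsum A1 A2 A3 != 0 ->
  (d <= k)%N -> A1 = (p ^ d)%:R * y -> triv_mod psi (k - d).
Proof.
move=> S_neq0 d_le_k A1E u u_unit /subr1_Zp_dvd [y' uE]; apply/eqP.
apply: contraNT S_neq0 => psi_u; apply/eqP; apply: (hatsum_eq0_psi_neq1 _ _ u_unit psi_u).
by rewrite A1E uE mulrACA -natrM -expnD (subnKC d_le_k) natr_Zp_pk mul0r.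
Qed.

Lemma not_triv_mod_of_hatsum (v : nat) (A1 A2 A3 c q : R) : hatsum A1 A2 A3 != 0 ->
  (v < k)%N -> c \is a GRing.unit -> A1 = (p ^ v)%:R * c -> A2 * A3 = p%:R * q ->
  ~ triv_mod psi (k - v - 1).
Proof.
move=> S_neq0 v_lt_k c_unit A1E A23.
have [g_eq0|g_gt0] := posnP (k - v - 1); first by rewrite g_eq0; apply: not_triv_mod0.
move=> psi_g; move/eqP: S_neq0; apply.
apply: (hatsum_eq0_triv_mod _ psi_g c_unit _ A23); first by lia.
by rewrite A1E mulrAC -natrM -expnD; congr ((p ^ _)%:R * c); lia.
Qed.

Lemma hatsum_int_logn (b1 b2 b3 : int) : hatsum b1%:~R b2%:~R b3%:~R != 0 ->
  [/\ b1 != 0, (logn p `|b1| < k)%N, triv_mod psi (k - logn p `|b1|) &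
      (0 < logn p `|b2| + logn p `|b3|)%N -> ~ triv_mod psi (k - logn p `|b1| - 1)].
Proof.
move=> S_neq0.
have pk_ndvd : ~~ (p ^ k %| `|b1|)%N.
  apply/negP => /intr_Zp_dvdn [y b1E]; apply: not_triv_mod0.
  by rewrite -(subnn k); apply: (triv_mod_of_hatsum S_neq0 (leqnn k) b1E).
have b1_neq0 : b1 != 0 by apply: contraNneq pk_ndvd => ->; rewrite dvdn0.
have v_lt_k : (logn p `|b1| < k)%N.
  rewrite ltnNge; apply: contra pk_ndvd => k_le_v.
  exact: dvdn_trans (dvdn_exp2l p k_le_v) (pfactor_dvdnn p `|b1|).
have [c c_unit b1E] := intr_Zp_logn b1_neq0.
split => // [|v23_gt0]; first exact: (triv_mod_of_hatsum S_neq0 (ltnW v_lt_k) b1E).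
have p_dvd : (p %| `|(b2 * b3)%R|)%N.
  rewrite abszM; case: (posnP (logn p `|b2|)) => [v2_eq0|]; last first.
    by rewrite logn_gt0 mem_primes => /and3P [_ _ /dvdn_mulr->].
  have : (0 < logn p `|b3|)%N by rewrite v2_eq0 in v23_gt0.
  by rewrite logn_gt0 mem_primes => /and3P [_ _ /dvdn_mull->].
have [q b23E] := intr_Zp_dvdn p_dvd.
apply: (not_triv_mod_of_hatsum S_neq0 v_lt_k c_unit b1E (q := q)).
by rewrite -intrM.
Qed.

End HatSum.

Lemma triv_mod_mono (p k : nat) (psi : 'Z_(p ^ k) -> algC) (f f' : nat) :
  (f <= f')%N -> triv_mod psi f -> triv_mod psi f'.
Proof.
move=> f_le_f' psi_f u u_unit /eqP u_cong; apply: psi_f => //; apply/eqP.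
by rewrite -(modn_dvdm _ (dvdn_exp2l p f_le_f')) u_cong modn_dvdm // dvdn_exp2l.
Qed.

Lemma conductor_expP (p k : nat) (psi : 'Z_(p ^ k) -> algC) (f : nat) :
  triv_mod psi f -> ~ triv_mod psi f.-1 -> conductor_exp psi f.
Proof.
move=> psi_f psi_f1; split=> // g g_lt_f psi_g; apply: psi_f1.
by apply: triv_mod_mono psi_g; rewrite -ltnS prednK // (leq_ltn_trans _ g_lt_f).
Qed.

Lemma eq_valuations (T : nat -> Prop) (k j v1 v2 v3 : nat) :
  (forall f f', (f <= f')%N -> T f -> T f') ->
  (v1 < k)%N -> (v2 < k)%N -> (v3 < k)%N ->
  T (k - v1)%N -> T (k - v2)%N -> T (k - v3)%N ->
  ((0 < v2 + v3)%N -> ~ T (k - v1 - 1)%N) ->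
  ((0 < v1 + v3)%N -> ~ T (k - v2 - 1)%N) ->
  ((0 < v1 + v2)%N -> ~ T (k - v3 - 1)%N) ->
  (0 < j)%N -> [|| v1 == j, v2 == j | v3 == j] ->
  [/\ v1 = j, v2 = j & v3 = j].
Proof.
move=> T_mono v1_lt v2_lt v3_lt T1 T2 T3 N1 N2 N3 j_gt0 vj.
have le (a b : nat) : (a < k)%N -> T (k - a)%N -> ~ T (k - b - 1)%N -> (a <= b)%N.
  move=> a_lt Ta Nb; rewrite leqNgt; apply/negP => b_lt_a.
  by apply: Nb; apply: T_mono Ta; lia.
have l21 := fun pos => le _ _ v2_lt T2 (N1 pos).
have l31 := fun pos => le _ _ v3_lt T3 (N1 pos).
have l12 := fun pos => le _ _ v1_lt T1 (N2 pos).
have l32 := fun pos => le _ _ v3_lt T3 (N2 pos).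
have l13 := fun pos => le _ _ v1_lt T1 (N3 pos).
have l23 := fun pos => le _ _ v2_lt T2 (N3 pos).
by case/or3P: vj => /eqP vj; split; lia.
Qed.

Theorem lemma5p15 (p k : nat) (eps : int) (gamma : algC)
  (xi : ZL p k -> algC) (psi : 'Z_(p ^ k) -> algC) (a1 a2 a3 : int) (j : nat) :
  prime p -> odd p ->
  (forall x : int, ~~ (p%:Z %| x ^+ 2 - eps)%Z) ->
  `|gamma| = 1 ->
  (2 <= k)%N -> (10 <= k)%N \/ (10 <= p)%N ->
  xi_hyp eps xi ->
  dirichlet_char psi -> (exists2 u, u \is a GRing.unit & psi u != 1) ->
  (1 <= j <= k)%N ->
  [|| vp_eq p a1 j, vp_eq p a2 j | vp_eq p a3 j] ->
  Hhat eps gamma xi psi a1 a2 a3 != 0 ->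
  [/\ conductor_exp psi (k - j), vp_eq p a1 j, vp_eq p a2 j & vp_eq p a3 j].
Proof.
move=> p_prime _ _ _ k_ge2 _ _ psi_char psi_nontriv /andP [j_gt0 _] vj Hhat_neq0.
have p_gt1 := prime_gt1 p_prime; have k_gt0 := leq_trans (isT : (0 < 2)%N) k_ge2.
pose h m := Hfun eps gamma xi m 1.
have h_unit m : h m != 0 -> m \is a GRing.unit.
  by rewrite /h /Hfun mulr1; case: ifP => [/andP [_ ->] | _]; rewrite ?eqxx.
have HhatE : Hhat eps gamma xi psi a1 a2 a3 =
    ((p%:R : algC) ^+ (2 * k))^-1 * hatsum psi h a1%:~R a2%:~R a3%:~R by [].
have S_neq0 : hatsum psi h a1%:~R a2%:~R a3%:~R != 0.
  by apply: contraNneq Hhat_neq0 => S0; rewrite HhatE S0 mulr0.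
have facts := hatsum_int_logn p_gt1 k_gt0 psi_char h_unit p_prime psi_nontriv.
have [a1_neq0 v1_lt T1 N1] := facts _ _ _ S_neq0.
have [a2_neq0 v2_lt T2 N2] := facts a2 a1 a3 ltac:(by rewrite -hatsum_swap12).
have [a3_neq0 v3_lt T3 N3] := facts a3 a2 a1 ltac:(by rewrite -hatsum_swap13).
have vj' : [|| logn p `|a1| == j, logn p `|a2| == j | logn p `|a3| == j].
  by case/or3P: vj => /andP [_ ->]; rewrite ?orbT.
rewrite addnC in N3.
have [v1j v2j v3j] := eq_valuations (@triv_mod_mono p k psi) v1_lt v2_lt v3_lt
  T1 T2 T3 N1 N2 N3 j_gt0 vj'.
split; rewrite /vp_eq ?a1_neq0 ?a2_neq0 ?a3_neq0 ?v1j ?v2j ?v3j ?eqxx //.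
apply: conductor_expP; first by rewrite -v1j.
by rewrite -subn1 -v1j; apply: N1; rewrite v2j addn_gt0 j_gt0.
Qed.
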